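(* Assume the standing setting and let $\epsilon>0$. If $|u^0_i-u^0_{i+1}|\le \epsilon/3^{M}$ for all $i\in\mathbb Z$, then for all $j\in\mathbb Z$ and all integers $0\le n\le N$, $$|w^{n+1}_j-w^n_j|\le \frac{\epsilon}{3^{N-n}},\qquad |w^n_j-w^n_{j+1}|\le \frac{\epsilon}{3^{N-n}} .$$
   Context: Standing setting. Let $F:\mathbb R\to\mathbb R$ be continuously differentiable. For a spatial step $\eta>0$, a time step $\tau>0$ and an initial sequence $(z^0_i)_{i\in\mathbb Z}$ of reals, the EFC (Euler forward in time, centered in space) scheme produces $(z^n_i)_{i\in\mathbb Z,\,n\in\mathbb N}$ by $z^{n+1}_i=z^n_i-F'(z^n_i)\frac{\tau}{2\eta}\,(z^n_{i+1}-z^n_{i-1})$. It satisfies the CFL condition if $|F'(z^n_i)|\,\tau/\eta\le 1$ for all $i\in\mathbb Z$, $n\in\mathbb N$. Fix $a\in\mathbb R$, $h>0$, $\Delta t>0$, an integer $N>1$ and an even integer $r\ge 2$; put $k=h/r$, $dt=\Delta t/r$, $M=Nr$. Let $u_0:\mathbb R\to\mathbb R$. The coarse solution $(w^n_j)$ is the EFC scheme with $\eta=h$, $\tau=\Delta t$, $w^0_j=u_0(a+jh)$; the fine solution $(u^n_i)$ is the EFC scheme with $\eta=k$, $\tau=dt$, $u^0_i=u_0(a+ik)$ (so $w^0_j=u^0_{jr}$). Both are assumed to satisfy the CFL condition. *)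

From Stdlib Require Import Reals ZArith Arith.
Open Scope R_scope.

(* EFC scheme: Euler forward in time, centered in space.
   dF plays the role of F'; eta = spatial step, tau = time step,
   z0 = initial sequence indexed by Z.  efc dF eta tau z0 n i = z^n_i. *)
Fixpoint efc (dF : R -> R) (eta tau : R) (z0 : Z -> R) (n : nat) : Z -> R :=
  match n with
  | O => z0
  | S m => fun i =>
      let z := efc dF eta tau z0 m in
      z i - dF (z i) * (tau / (2 * eta)) * (z (i + 1)%Z - z (i - 1)%Z)
  end.

Definition CFL (dF : R -> R) (eta tau : R) (z0 : Z -> R) : Prop :=
  forall (n : nat) (i : Z),
    Rabs (dF (efc dF eta tau z0 n i)) * tau / eta <= 1.

(* Under the CFL condition one EFC step moves a value by at most half the spread of its two
   neighbours, so time increments are bounded by the current spatial differences and spatial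
   differences grow at most by a factor 3 per step.  The coarse grid samples every r-th fine
   point, so its initial differences are at most r eps / 3^(N r), and r <= 3^(N (r - 1))
   absorbs the factor r. *)

From Stdlib Require Import Reals ZArith Lra Lia Psatz.
Open Scope R_scope.

Section EFC_stability.

Variables (dF : R -> R) (eta tau : R) (z0 : Z -> R).
Hypotheses (Heta : 0 < eta) (Htau : 0 < tau) (HCFL : CFL dF eta tau z0).

Let z := efc dF eta tau z0.

Lemma efc_step_bound (n : nat) (B : R) (j : Z) :
  (forall i, Rabs (z n i - z n (i + 1)%Z) <= B) ->
  Rabs (z (S n) j - z n j) <= B.
Proof.
  intros HB.
  set (c := Rabs (dF (z n j)) * tau / eta).
  assert (Hc1 : c <= 1) by apply HCFL.
  assert (Hc0 : 0 <= c).
  { unfold c, Rdiv. apply Rmult_le_pos; [apply Rmult_le_pos; [apply Rabs_pos | lra]|].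
    left; apply Rinv_0_lt_compat; lra. }
  set (d := z n (j + 1)%Z - z n (j - 1)%Z).
  assert (Hd : Rabs d <= 2 * B).
  { assert (H1 := HB j). assert (H2 := HB (j - 1)%Z).
    replace (j - 1 + 1)%Z with j in H2 by lia.
    rewrite Rabs_minus_sym in H1, H2.
    replace d with ((z n (j + 1)%Z - z n j) + (z n j - z n (j - 1)%Z)) by (unfold d; ring).
    pose proof (Rabs_triang (z n (j + 1)%Z - z n j) (z n j - z n (j - 1)%Z)). lra. }
  assert (Hstep : z (S n) j - z n j = - (dF (z n j) * (tau / (2 * eta)) * d)).
  { unfold d, z. cbn [efc]. ring. }
  rewrite Hstep, Rabs_Ropp, !Rabs_mult, (Rabs_right (tau / (2 * eta))).
  2: { apply Rle_ge, Rlt_le, Rdiv_lt_0_compat; lra. }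
  replace (Rabs (dF (z n j)) * (tau / (2 * eta)) * Rabs d) with (c * (Rabs d / 2))
    by (unfold c; field; lra).
  pose proof (Rabs_pos d). nra.
Qed.

Lemma efc_diff_succ_bound (n : nat) (B : R) :
  (forall i, Rabs (z n i - z n (i + 1)%Z) <= B) ->
  forall i, Rabs (z (S n) i - z (S n) (i + 1)%Z) <= 3 * B.
Proof.
  intros HB i.
  assert (S1 := efc_step_bound n B i HB).
  assert (S2 := efc_step_bound n B (i + 1)%Z HB).
  assert (S0 := HB i).
  replace (z (S n) i - z (S n) (i + 1)%Z)
    with ((z (S n) i - z n i) + (z n i - z n (i + 1)%Z) + - (z (S n) (i + 1)%Z - z n (i + 1)%Z))
    by ring.
  pose proof (Rabs_triang (z (S n) i - z n i + (z n i - z n (i + 1)%Z))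
                          (- (z (S n) (i + 1)%Z - z n (i + 1)%Z))).
  pose proof (Rabs_triang (z (S n) i - z n i) (z n i - z n (i + 1)%Z)).
  rewrite Rabs_Ropp in *. lra.
Qed.

Lemma efc_diff_pow3_bound (B : R) :
  (forall i, Rabs (z0 i - z0 (i + 1)%Z) <= B) ->
  forall n i, Rabs (z n i - z n (i + 1)%Z) <= B * 3 ^ n.
Proof.
  intros H0 n. induction n as [|n IH]; intro i.
  - rewrite Rmult_1_r. apply H0.
  - replace (B * 3 ^ S n) with (3 * (B * 3 ^ n)) by (simpl; ring).
    exact (efc_diff_succ_bound n _ IH i).
Qed.

End EFC_stability.

Lemma diff_subsample_bound (g : Z -> R) (e : R) (r : nat) :
  (forall i, Rabs (g i - g (i + 1)%Z) <= e) ->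
  forall i, Rabs (g (i * Z.of_nat r)%Z - g ((i + 1) * Z.of_nat r)%Z) <= INR r * e.
Proof.
  intros Hg i.
  replace ((i + 1) * Z.of_nat r)%Z with (i * Z.of_nat r + Z.of_nat r)%Z by ring.
  generalize (i * Z.of_nat r)%Z as p. intro p.
  induction r as [|m IH].
  - rewrite Z.add_0_r, Rminus_diag, Rabs_R0. simpl; lra.
  - rewrite S_INR, Nat2Z.inj_succ.
    replace (p + Z.succ (Z.of_nat m))%Z with (p + Z.of_nat m + 1)%Z by lia.
    replace (g p - g (p + Z.of_nat m + 1)%Z)
      with ((g p - g (p + Z.of_nat m)%Z) + (g (p + Z.of_nat m)%Z - g (p + Z.of_nat m + 1)%Z))
      by ring.
    pose proof (Rabs_triang (g p - g (p + Z.of_nat m)%Z)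
                            (g (p + Z.of_nat m)%Z - g (p + Z.of_nat m + 1)%Z)).
    pose proof (Hg (p + Z.of_nat m)%Z). lra.
Qed.

Lemma INR_succ_le_pow3 (k : nat) : INR (S k) <= 3 ^ k.
Proof.
  induction k as [|k IH].
  - simpl; lra.
  - rewrite !S_INR in *. cbn [pow]. pose proof (pos_INR k). lra.
Qed.

Lemma scaled_pow3_bound (eps : R) (N r n : nat) :
  0 <= eps -> (1 <= N)%nat -> (1 <= r)%nat -> (n <= N)%nat ->
  INR r * (eps / 3 ^ (N * r)) * 3 ^ n <= eps / 3 ^ (N - n).
Proof.
  intros Heps HN Hr Hn.
  assert (Hsplit : 3 ^ (N * r) = 3 ^ n * 3 ^ (N - n) * 3 ^ (N * r - N)).
  { rewrite <- !pow_add. f_equal. nia. }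
  assert (Hr3 : INR r <= 3 ^ (N * r - N)).
  { replace r with (S (r - 1)) at 1 by lia.
    eapply Rle_trans; [apply INR_succ_le_pow3 | apply Rle_pow; [lra | nia]]. }
  pose proof (pow_lt 3 n ltac:(lra)).
  pose proof (pow_lt 3 (N - n) ltac:(lra)).
  pose proof (pow_lt 3 (N * r - N) ltac:(lra)).
  rewrite Hsplit.
  replace (INR r * (eps / (3 ^ n * 3 ^ (N - n) * 3 ^ (N * r - N))) * 3 ^ n)
    with (eps / 3 ^ (N - n) * (INR r / 3 ^ (N * r - N))) by (field; lra).
  rewrite <- (Rmult_1_r (eps / 3 ^ (N - n))) at 2.
  apply Rmult_le_compat_l.
  - unfold Rdiv. apply Rmult_le_pos; [lra | left; apply Rinv_0_lt_compat; lra].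
  - unfold Rdiv. rewrite <- (Rinv_r (3 ^ (N * r - N))) by lra.
    apply Rmult_le_compat_r; [left; apply Rinv_0_lt_compat |]; lra.
Qed.

Theorem corollary1
  (F dF : R -> R)
  (HF : forall x, derivable_pt_lim F x (dF x))
  (HdF : forall x, continuity_pt dF x)
  (a h Dt : R) (N r : nat) (u0 : R -> R) (eps : R)
  (Hh : 0 < h) (HDt : 0 < Dt) (HN : (1 < N)%nat)
  (Hr2 : (2 <= r)%nat) (Hreven : Nat.Even r)
  (HCFLw : CFL dF h Dt (fun j => u0 (a + IZR j * h)))
  (HCFLu : CFL dF (h / INR r) (Dt / INR r) (fun i => u0 (a + IZR i * (h / INR r))))
  (Heps : 0 < eps)
  (Hu : forall i : Z,
      Rabs (u0 (a + IZR i * (h / INR r)) - u0 (a + IZR (i + 1) * (h / INR r)))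
        <= eps / 3 ^ (N * r)) :
  forall (j : Z) (n : nat), (n <= N)%nat ->
    let w := efc dF h Dt (fun j => u0 (a + IZR j * h)) in
    Rabs (w (S n) j - w n j) <= eps / 3 ^ (N - n) /\
    Rabs (w n j - w n (j + 1)%Z) <= eps / 3 ^ (N - n).
Proof.
  intros j n Hn w.
  set (B := INR r * (eps / 3 ^ (N * r))).
  assert (Hsample : forall i, IZR i * h = IZR (i * Z.of_nat r) * (h / INR r)).
  { intro i. rewrite mult_IZR, <- INR_IZR_INZ. field. apply not_0_INR. lia. }
  assert (Hw0 : forall i, Rabs (u0 (a + IZR i * h) - u0 (a + IZR (i + 1) * h)) <= B).
  { intro i. rewrite !Hsample.
    exact (diff_subsample_bound (fun p => u0 (a + IZR p * (h / INR r))) _ r Hu i). }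
  assert (Hwn := efc_diff_pow3_bound dF h Dt _ Hh HDt HCFLw B Hw0 n).
  assert (Hfin : B * 3 ^ n <= eps / 3 ^ (N - n)) by (apply scaled_pow3_bound; lra || lia).
  split; eapply Rle_trans; try exact Hfin.
  - exact (efc_step_bound dF h Dt _ Hh HDt HCFLw n _ j Hwn).
  - apply Hwn.
Qed.
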